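(* Let $k\le l$ be positive integers with $\gcd(k,l)=1$, let $n\ge 1$ and $m\ge 0$ be integers, and write $m=qn+r$ with integers $q\ge0$, $0\le r<n$. Then there exists $A\in\mathcal D^{k,l}(m,n)$ such that ${\rm tdet}(A)\le nk(q+1)$.
   Context: $\mathcal D^{k,l}(m,n)$ denotes the set of all $nk\times nl$ matrices with nonnegative integer entries all of whose row sums equal $ml$ and all of whose column sums equal $mk$. For an $s\times t$ matrix $A=(a_{ij})$ with $s\le t$, a transversal of $A$ is a set of entries $T=\{a_{1i_1},\dots,a_{si_s}\}$ with $i_1,\dots,i_s\in\{1,\dots,t\}$ pairwise distinct, and $|T|=a_{1i_1}+\cdots+a_{si_s}$; if $s>t$, the transversals of $A$ are those of its transpose. The tropical determinant is ${\rm tdet}(A)=\max_T|T|$ over all transversals $T$ of $A$. *)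

From mathcomp Require Import all_boot all_order all_algebra.
Unset Printing Implicit Defensive.

Definition inD (k l m n : nat) (A : 'M[nat]_(n * k, n * l)) : Prop :=
  (forall i, \sum_(j < n * l) A i j = m * l) /\
  (forall j, \sum_(i < n * k) A i j = m * k).

(* For s <= t, transversals are injective choices of a column for each row;
   for s > t, transversals of the transpose (injective choices of a row for
   each column). *)
Definition tdet (s t : nat) (A : 'M[nat]_(s, t)) : nat :=
  if s <= t then
    \max_(f : {ffun 'I_s -> 'I_t} | injectiveb f) \sum_(i < s) A i (f i)
  else
    \max_(g : {ffun 'I_t -> 'I_s} | injectiveb g) \sum_(j < t) A (g j) j.
Arguments tdet {s t} A.

From mathcomp Require Import all_boot all_order all_algebra.
From mathcomp Require Import zify.

(* Take the matrix whose (i, j) entry is q + [(i + j) mod n < r].  Along any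
   row or column the correction term is n-periodic with exactly r ones per
   period, and a line of A has length nl or nk, a multiple of n; so the row
   sums are q nl + rl = ml and the column sums q nk + rk = mk.  Every entry is
   at most q + 1 and a transversal has nk entries, whence tdet A <= nk(q + 1). *)

Section PeriodicBig.

Context {R : Type} {idx : R} {op : Monoid.com_law idx} {n : nat} {F : nat -> R}.
Hypothesis F_periodic : forall x, F (x + n) = F x.

Lemma big_periodic_shift i :
  \big[op/idx]_(j < n) F (i + j) = \big[op/idx]_(j < n) F j.
Proof.
elim: i => [|i IHi] //; case: n F_periodic IHi => [|n'] Fper IHi.
  by rewrite !big_ord0.
rewrite -IHi big_ord_recr big_ord_recl /= addn0 Monoid.mulmC.
congr (op _ _); first by rewrite addSnnS Fper.
by apply: eq_bigr => j _; rewrite addSnnS.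
Qed.

Lemma big_periodic_blocks i c :
  \big[op/idx]_(j < n * c) F (i + j)
  = \big[op/idx]_(b < c) \big[op/idx]_(j < n) F j.
Proof.
elim: c => [|c IHc]; first by rewrite muln0 !big_ord0.
rewrite mulnS addnC big_split_ord IHc big_ord_recr /=.
congr (op _ _); rewrite -(big_periodic_shift (i + n * c)).
by apply: eq_bigr => j _; rewrite addnA.
Qed.

End PeriodicBig.

Lemma sum_ltn_ord n r : r <= n -> \sum_(j < n) (j < r) = r.
Proof.
move=> le_rn; rewrite -(big_mkord xpredT (fun j => nat_of_bool (j < r))).
rewrite (big_cat_nat (n := r)) //=.
rewrite [X in _ + X]big_nat_cond [X in _ + X]big1 ?addn0; last first.
  by move=> j /andP[/andP[le_rj _] _]; rewrite ltnNge le_rj.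
rewrite big_nat_cond (eq_bigr (fun=> 1)); last by move=> j /andP[/andP[_ ->] _].
by rewrite -big_nat_cond sum_nat_const_nat subn0 muln1.
Qed.

Lemma sum_modn_lt_blocks n r i c : r <= n ->
  \sum_(j < n * c) ((i + j) %% n < r) = r * c.
Proof.
move=> le_rn.
pose F x : nat := x %% n < r.
have F_periodic x : F (x + n) = F x by rewrite /F modnDr.
rewrite (big_periodic_blocks F_periodic).
have F_period : \sum_(j < n) F j = r.
  by rewrite -[RHS](sum_ltn_ord _ _ le_rn); apply: eq_bigr => j _; rewrite /F modn_small.
by rewrite (eq_bigr (fun=> r)) // sum_nat_const card_ord mulnC.
Qed.

Definition balanced_mx (q n r s t : nat) : 'M[nat]_(s, t) :=
  \matrix_(i, j) (q + ((i + j) %% n < r)).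

Lemma balanced_mx_inD k l n q r : r <= n ->
  inD k l (q * n + r) n (balanced_mx q n r (n * k) (n * l)).
Proof.
move=> le_rn; split=> [i | j].
- under eq_bigr do rewrite mxE.
  rewrite big_split /= sum_nat_const card_ord sum_modn_lt_blocks //; lia.
- under eq_bigr => i _ do rewrite mxE (addnC i).
  rewrite big_split /= sum_nat_const card_ord sum_modn_lt_blocks //; lia.
Qed.

Lemma tdet_le_bounded_entries s t (A : 'M[nat]_(s, t)) b :
  (forall i j, A i j <= b) -> tdet A <= minn s t * b.
Proof.
move=> A_le_b; rewrite /tdet; case: (leqP s t) => _; apply/bigmax_leqP => f _;
  by rewrite -[X in X * b]card_ord -sum_nat_const leq_sum.
Qed.

Theorem proposition3p1 (k l n m q r : nat) :
  0 < k -> k <= l -> coprime k l -> 1 <= n ->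
  m = q * n + r -> r < n ->
  exists A : 'M[nat]_(n * k, n * l),
    inD k l m n A /\ tdet A <= n * k * (q + 1).
Proof.
move=> _ _ _ _ -> lt_rn.
exists (balanced_mx q n r (n * k) (n * l)); split.
  exact: balanced_mx_inD (ltnW lt_rn).
apply: leq_trans (@tdet_le_bounded_entries _ _ _ (q + 1) _) _.
  by move=> i j; rewrite mxE leq_add2l leq_b1.
by rewrite leq_mul2r geq_minl orbT.
Qed.
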